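(* Let $s\ge2$, $k\ge1$ and $s_0$ be integers with $0\le s_0<\min\{k,s\}$. Let $n=sk+s_0$, $d_c=\lfloor n/s\rfloor=k$, $d_o=\lfloor(n-1)/(s-1)\rfloor$, and let $$g(s,k,s_0)=\frac{\gamma_{cc}}{\gamma_{MBR,o}},\qquad \gamma_{MBR,o}=\frac{2d_oM}{2kd_o-k^2+k},$$ where $\gamma_{cc}$ is the repair bandwidth of the Cubic Code for the Fixed Cluster Repair System with parameters $(n,k,s)$ storing a file of size $M$. Then $$g(s,k,s_0)\le\frac{1}{2(1-e^{-1})}\cdot\frac{(s+3)k+s-3}{(s+1)k-1}.$$
   Context: FCRS with parameters $(n,k,s)$: $n=ds+s_0$ servers, $d=\lfloor n/s\rfloor$ (here $d=d_c=k$), clusters $1,\dots,s$ of size $d$ and cluster $s+1$ of size $s_0$; any $k$ servers recover the file; a failed server in cluster $r$ is repaired by downloading from all $d$ servers of a cluster $i\in[s]$, $i\ne r$. Cubic Code: encode $m$ file chunks (each of size $M/m$) with a $(d^{s+1},m)$ MDS code with symbols $C_b$ indexed by $b=b_{s+1}\cdots b_1$, $b_i\in[d]$; server $(i,j)$ stores $\{C_b:b_i=j\}$; to repair $(r,\ell)$ from cluster $i$, server $(i,j)$ sends $\{C_b:b_i=j,b_r=\ell\}$; $m=\min\{d^{s+1}-\prod_{i=1}^{s+1}(d-k_i):k_i\ge0,\ \sum_i k_i=k,\ k_{s+1}\le s_0\}$. Thus $\gamma_{cc}=Md^s/m$. *)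

From HB Require Import structures.
From mathcomp Require Import all_boot all_order all_algebra.
From mathcomp Require Import all_classical all_reals all_analysis.
Set Implicit Arguments. Unset Strict Implicit. Unset Printing Implicit Defensive.
Import Order.TTheory GRing.Theory Num.Theory.

(* FCRS with parameters (n,k,s): d = floor(n/s), s0 = n mod s (size of the
   extra cluster s+1).
   Clusters are indexed by 'I_(s.+1); index ord_max is cluster s+1.
   The k_i range over 0..k (forced by sum k_i = k). *)

Definition fcrs_d (n s : nat) : nat := n %/ s.
Definition fcrs_s0 (n s : nat) : nat := n %% s.

Definition cc_admissible (n k s : nat) (kv : {ffun 'I_s.+1 -> 'I_k.+1}) : bool :=
  ((\sum_(i < s.+1) (kv i : nat)) == k) && ((kv ord_max : nat) <= fcrs_s0 n s).

(* minimum over admissible vectors; the seed d^(s+1) is an upper bound of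
   every candidate value, so it does not affect the minimum of a nonempty set *)
Definition cc_m (n k s : nat) : nat :=
  let d := fcrs_d n s in
  \big[minn/d ^ s.+1]_(kv : {ffun 'I_s.+1 -> 'I_k.+1} | @cc_admissible n k s kv)
     (d ^ s.+1 - \prod_(i < s.+1) (d - kv i)).

Local Open Scope ring_scope.

Definition gamma_cc (R : realType) (n k s : nat) (M : R) : R :=
  M * (fcrs_d n s)%:R ^+ s / (cc_m n k s)%:R.

Definition fcrs_do (n s : nat) : nat := (n.-1 %/ s.-1)%N.

Definition gamma_MBR_o (R : realType) (n k s : nat) (M : R) : R :=
  2 * (fcrs_do n s)%:R * M /
  (2 * k%:R * (fcrs_do n s)%:R - k%:R ^+ 2 + k%:R).

Definition g_ratio (R : realType) (s k s0 : nat) (M : R) : R :=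
  gamma_cc (s * k + s0)%N k s M / gamma_MBR_o (s * k + s0)%N k s M.

From HB Require Import structures.
From mathcomp Require Import all_boot all_order all_algebra.
From mathcomp Require Import all_classical all_reals all_analysis.
From mathcomp Require Import ring lra zify.
Set Implicit Arguments. Unset Strict Implicit. Unset Printing Implicit Defensive.
Import Order.TTheory GRing.Theory Num.Theory.
Local Open Scope ring_scope.

(* The Cubic Code parameter m is the minimum of d^(s+1) - prod_i (d - k_i) over
   the splittings k = sum_i k_i.  Here d = k, and by AM-GM the product is at most
   (k (1 - 1/(s+1)))^(s+1) <= k^(s+1)/e, so m >= (1 - 1/e) k^(s+1).  Hence
   g <= (2 - (k-1)/d_o) / (2 (1 - 1/e)), which grows with d_o; the bound follows
   from (s-1) d_o <= n - 1 < (s+1) k - 1, a consequence of s0 < k. *)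

Section ExpBounds.
Variable R : realType.

Lemma onemX_le_expR (x : R) (n : nat) : x <= 1 -> (1 - x) ^+ n <= expR (- x * n%:R).
Proof.
move=> x_le1; rewrite expRM_natr.
apply: lerXn2r; rewrite ?nnegrE ?subr_ge0 ?expR_ge0 //.
exact: expR_ge1Dx.
Qed.

Lemma onem_invn_expn_le_expRN1 (n : nat) : (1 - n.+1%:R^-1) ^+ n.+1 <= expR (-1) :> R.
Proof.
apply: le_trans (onemX_le_expR n.+1 _) _; first by rewrite invf_le1 ?ler1n.
by rewrite mulNr mulVf ?pnatr_eq0.
Qed.

Lemma prod_sub_le_expRN1 (n : nat) (K : R) (x : 'I_n.+1 -> R) :
  0 <= K -> (forall i, x i <= K) -> \sum_i x i = K ->
  \prod_i (K - x i) <= K ^+ n.+1 * expR (-1).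
Proof.
move=> K_ge0 x_leK sum_x.
have AGM := (@leif_AGM R _ predT (fun i => K - x i) (fun i _ => _)).1.
rewrite card_ord sumrB sum_x sumr_const card_ord in AGM.
apply: le_trans (AGM _) _; first by move=> i; rewrite subr_ge0.
have -> : (K *+ n.+1 - K) / n.+1%:R = K * (1 - n.+1%:R^-1).
  by rewrite -mulr_natr; field; rewrite addrC natr1 pnatr_eq0.
rewrite exprMn ler_wpM2l ?exprn_ge0 //; exact: onem_invn_expn_le_expRN1.
Qed.

End ExpBounds.

Lemma cc_m_ge_expR (R : realType) (n k s : nat) :
  fcrs_d n s = k -> k%:R ^+ s.+1 * (1 - expR (-1)) <= (cc_m n k s)%:R :> R.
Proof.
rewrite /cc_m => ->; set K : R := k%:R.
have e_ge0 : 0 <= expR (-1) :> R := expR_ge0 _.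
apply: (big_ind (fun x : nat => K ^+ s.+1 * (1 - expR (-1)) <= x%:R)).
- by rewrite natrX ler_piMr ?exprn_ge0 ?ler0n // lerBlDr lerDl.
- by move=> x y; rewrite /minn; case: ltnP.
move=> kv /andP[/eqP sum_kv _].
have prod_le : (\prod_i (k - kv i) <= k ^ s.+1)%N.
  by apply: leq_trans (leq_prod (fun i _ => leq_subr (kv i) k)) _; rewrite prod_nat_const card_ord.
have prod_R : (\prod_i (k - kv i))%:R <= K ^+ s.+1 * expR (-1).
  rewrite natr_prod; under eq_bigr => i _ do rewrite (natrB _ (ltnSE (ltn_ord (kv i)))).
  apply: prod_sub_le_expRN1 => [|i|]; rewrite ?ler0n ?ler_nat ?(ltnSE (ltn_ord (kv i))) //.
  by rewrite -natr_sum sum_kv.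
by rewrite natrB // natrX mulrBr mulr1 lerB.
Qed.

Lemma fcrs_d_MDl (s k s0 : nat) : (s0 < s)%N -> fcrs_d (s * k + s0) s = k.
Proof. by move=> s0_lt_s; rewrite /fcrs_d mulnC divnMDl ?divn_small ?addn0 //; lia. Qed.

Lemma leq_fcrs_do (s k s0 : nat) : (1 < s)%N -> (k <= fcrs_do (s * k + s0) s)%N.
Proof. by move=> s_gt1; rewrite /fcrs_do leq_divRL; nia. Qed.

Lemma fcrs_do_lt (s k s0 : nat) :
  (s0 < k)%N -> (s.-1 * fcrs_do (s * k + s0) s < s.+1 * k)%N.
Proof.
move=> s0_lt_k; have := leq_trunc_div (s * k + s0).-1 s.-1.
by rewrite /fcrs_do mulnC; lia.
Qed.

Section RatioBounds.
Variable R : realType.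
Implicit Types (K D S m c : R).

Lemma mbr_ratio_le (s : nat) K D m c :
  0 < K -> 0 < D -> 0 < c -> K ^+ s.+1 * c <= m -> K <= 2 * D + 1 ->
  K ^+ s * (2 * K * D - K ^+ 2 + K) / (2 * D * m) <= (2 * c)^-1 * ((2 * D - K + 1) / D).
Proof.
move=> K_gt0 D_gt0 c_gt0 m_ge K_le.
have Ks_gt0 : 0 < K ^+ s := exprn_gt0 _ K_gt0.
have m_gt0 : 0 < m by apply: lt_le_trans m_ge; rewrite mulr_gt0 ?exprn_gt0.
have -> : (2 * c)^-1 * ((2 * D - K + 1) / D) =
          K ^+ s * (2 * K * D - K ^+ 2 + K) / (2 * D * (K ^+ s.+1 * c)).
  by rewrite [K ^+ s.+1]exprS; field; rewrite !gt_eqF.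
have N_ge0 : 0 <= 2 * K * D - K ^+ 2 + K.
  have -> : 2 * K * D - K ^+ 2 + K = K * (2 * D + 1 - K) by ring.
  by rewrite mulr_ge0 ?subr_ge0 // ltW.
apply: ler_wpM2l; first by rewrite mulr_ge0 // ltW.
rewrite lef_pV2 ?posrE ?mulr_gt0 ?exprn_gt0 //.
by rewrite ler_pM2l ?mulr_gt0.
Qed.

Lemma mbr_factor_le S K D :
  0 < S -> 1 <= K -> 0 < D -> (S - 1) * D <= (S + 1) * K - 1 ->
  (2 * D - K + 1) / D <= ((S + 3) * K + S - 3) / ((S + 1) * K - 1).
Proof.
move=> S_gt0 K_ge1 D_gt0 D_le.
have B_gt0 : 0 < (S + 1) * K - 1 by nra.
rewrite ler_pdivrMr // mulrAC ler_pdivlMr //.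
(* With A, B the numerator and denominator on the right,
   A D - (2 D - K + 1) B = (K - 1) (B - (S - 1) D). *)
have : 0 <= (K - 1) * ((S + 1) * K - 1 - (S - 1) * D) by apply: mulr_ge0; lra.
nra.
Qed.

End RatioBounds.

Lemma gamma_ratioE (R : realType) (n k s : nat) (M : R) : M != 0 ->
  gamma_cc n k s M / gamma_MBR_o n k s M =
  (fcrs_d n s)%:R ^+ s * (2 * k%:R * (fcrs_do n s)%:R - k%:R ^+ 2 + k%:R) /
  (2 * (fcrs_do n s)%:R * (cc_m n k s)%:R).
Proof.
move=> M_neq0; rewrite /gamma_cc /gamma_MBR_o invf_div mulf_div.
set a := _ ^+ s; set N := (_ - _ + _); set D := (fcrs_do n s)%:R.
set m := (cc_m n k s)%:R.
have -> : M * a * N / (m * (2 * D * M)) = M * (a * N) / (M * (2 * D * m)).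
  by congr (_ / _); ring.
by rewrite invfM mulrACA divff ?mul1r.
Qed.

Theorem proposition2 (R : realType) (s k s0 : nat) (M : R) :
  (2 <= s)%N -> (1 <= k)%N -> (s0 < minn k s)%N -> 0 < M ->
  g_ratio s k s0 M <=
  (2 * (1 - expR (-1)))^-1 *
  (((s%:R + 3) * k%:R + s%:R - 3) / ((s%:R + 1) * k%:R - 1)).
Proof.
move=> s_ge2 k_ge1; rewrite leq_min => /andP[s0_lt_k s0_lt_s] M_gt0.
have k_le_D := leq_fcrs_do k s0 s_ge2.
have D_lt := fcrs_do_lt s s0_lt_k.
set D := fcrs_do _ _ in k_le_D D_lt *.
have m_ge := cc_m_ge_expR R (fcrs_d_MDl k s0_lt_s).
have c_gt0 : 0 < 1 - expR (-1) :> R by rewrite subr_gt0 expR_lt1 ltrN10.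
have K_gt0 : 0 < k%:R :> R by rewrite ltr0n.
have D_gt0 : 0 < D%:R :> R by rewrite ltr0n (leq_trans k_ge1).
rewrite /g_ratio gamma_ratioE ?gt_eqF // fcrs_d_MDl //.
apply: le_trans (mbr_ratio_le K_gt0 D_gt0 c_gt0 m_ge _) _.
  by move: k_le_D; rewrite -(ler_nat R); lra.
rewrite ler_pM2l ?invr_gt0 ?mulr_gt0 //.
apply: mbr_factor_le => //; rewrite ?ltr0n ?ler1n ?(ltnW s_ge2) //.
by move: D_lt; rewrite -(ler_nat R) -natr1 !natrM -natr1 -subn1 natrB ?(ltnW s_ge2) //; lra.
Qed.
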